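(* Let $T : M_{m,n}\to M_{r,s}$ be a triple morphism which is not identically zero. Then $T$ is one-to-one, and there exist an integer $k\ge 1$ and unitary matrices $U\in M_r$, $V\in M_s$ such that $$T(A) = U\,\mathrm{diag}\{A, A,\dots, A, 0\}\,V\qquad (A\in M_{m,n}),$$ where $\mathrm{diag}\{A,\dots,A,0\}$ is the block-diagonal $r\times s$ matrix with $k$ copies of $A$ followed by a zero block of size $(r-km)\times(s-kn)$ (possibly empty).
   Context: $M_{m,n}$ denotes the $m\times n$ complex matrices, a triple system with product $xy^*z$. A triple morphism is a linear map $T$ with $T(xy^*z) = T(x)T(y)^*T(z)$. *)

From HB Require Import structures.
From mathcomp Require Import all_boot all_order all_algebra.
From mathcomp Require Import complex.
From mathcomp Require Import Rstruct.
Set Implicit Arguments.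
Unset Strict Implicit.
Unset Printing Implicit Defensive.
Import Order.TTheory GRing.Theory Num.Theory.
Local Open Scope ring_scope.

Definition CC : numClosedFieldType := (Rdefinitions.R)[i].

Definition adjmx (m n : nat) (A : 'M[CC]_(m, n)) : 'M[CC]_(n, m) :=
  map_mx Num.conj A^T.

Definition triple (m n : nat) (x y z : 'M[CC]_(m, n)) : 'M[CC]_(m, n) :=
  x *m adjmx y *m z.

Definition triple_morphism (m n r s : nat) (T : 'M[CC]_(m, n) -> 'M[CC]_(r, s)) :=
  linear T /\ forall x y z, T (triple x y z) = triple (T x) (T y) (T z).

Definition unitary_mx (n : nat) (U : 'M[CC]_n) :=
  U *m adjmx U = 1%:M /\ adjmx U *m U = 1%:M.

Definition mx_at (m n : nat) (A : 'M[CC]_(m, n)) (a b : nat) : CC :=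
  match insub a, insub b with
  | Some i, Some j => A i j
  | _, _ => 0
  end.

(* diag{A, ..., A, 0} : the r x s block-diagonal matrix with k copies of A
   (the l-th copy, l < k, occupying rows l*m .. l*m+m-1 and columns
   l*n .. l*n+n-1) followed by a zero block of size (r - k m) x (s - k n). *)
Definition blockdiag_rep (m n r s k : nat) (A : 'M[CC]_(m, n)) : 'M[CC]_(r, s) :=
  \matrix_(i < r, j < s)
    if [&& (i < k * m)%N, (j < k * n)%N & (i %/ m == j %/ n)%N]
    then mx_at A (i %% m) (j %% n) else 0.

From HB Require Import structures.
From mathcomp Require Import all_boot all_order all_algebra.
From mathcomp Require Import sesquilinear spectral.
From mathcomp.real_closed Require Import mxtens.
Set Implicit Arguments.
Unset Strict Implicit.
Unset Printing Implicit Defensive.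
Import GRing.Theory Num.Theory.
Local Open Scope ring_scope.
Local Open Scope sesquilinear_scope.

(* Write E_ij = T(e_ij) for the images of the matrix units and W = E_{i0 j0}.
   Preserving x y^* z on matrix units means E_ij E_kl^* E_pq = [j = l][k = p]
   E_iq, so W is a partial isometry and E_ij = E_{i j0} W^* E_{i0 j}.  Take an
   orthonormal basis b_1, ..., b_k of the row space of W, so that B^* B = W^* W.
   Then the k m rows b_l E_{i j0}^* of C and the k n rows b_l W^* E_{i0 j} of D
   are orthonormal and T A = C^* (I_k (x) A) D.  Completing C and D to unitary
   matrices gives the block-diagonal form, and A is recovered from
   I_k (x) A = C T(A) D^*, which also forces k >= 1 as soon as T <> 0. *)

Section TensorProduct.
Variable R : comPzRingType.

Fact tensmx_is_linear m n p q (M : 'M[R]_(m, n)) :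
  linear (@tensmx R m n p q M).
Proof.
by move=> a A B; apply/matrixP => i j; rewrite !mxE mulrDr mulrCA.
Qed.
HB.instance Definition _ m n p q (M : 'M[R]_(m, n)) :=
  GRing.isLinear.Build R 'M[R]_(p, q) 'M[R]_(m * p, n * q) _
    (@tensmx R m n p q M) (@tensmx_is_linear m n p q M).

Lemma tensmxDl m n p q (M N : 'M[R]_(m, n)) (A : 'M[R]_(p, q)) :
  (M + N) *t A = M *t A + N *t A.
Proof. by apply/matrixP => i j; rewrite !mxE mulrDl. Qed.

Lemma tensmx_delta m n p q (i : 'I_m) (j : 'I_n) (i' : 'I_p) (j' : 'I_q) :
  delta_mx i j *t delta_mx i' j' =
    delta_mx (mxtens_index (i, i')) (mxtens_index (j, j')) :> 'M[R]_(_, _).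
Proof.
apply/matrixP => a b.
case: (mxtens_indexP a) => a1 a2; case: (mxtens_indexP b) => b1 b2.
rewrite tensmxE !mxE !(inj_eq (can_inj (@mxtens_indexK _ _))) !xpair_eqE.
by rewrite -natrM mulnb andbACA.
Qed.

Lemma tens1mx_delta k m n (i : 'I_m) (j : 'I_n) :
  (1%:M : 'M[R]_k) *t delta_mx i j =
    \sum_(l < k) delta_mx (mxtens_index (l, i)) (mxtens_index (l, j)).
Proof.
rewrite scalar_mx_sum_delta.
rewrite (big_morph (fun M : 'M[R]_k => M *t delta_mx i j)
                   (fun M N => tensmxDl M N _) (tens0mx _)).
by apply: eq_bigr => l _; rewrite scale1r tensmx_delta.
Qed.

End TensorProduct.

Section MatrixProducts.
Variable R : pzRingType.

Lemma mulmx_delta_mx m n p q (A : 'M[R]_(m, n)) (i : 'I_n) (j : 'I_p)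
    (B : 'M[R]_(p, q)) :
  A *m delta_mx i j *m B = col i A *m row j B.
Proof.
by rewrite -(mul_delta_mx (0 : 'I_1)) mulmxA -colE -mulmxA -rowE.
Qed.

Lemma mulmx_sum_col_row m n p (A : 'M[R]_(m, n)) (B : 'M[R]_(n, p)) :
  A *m B = \sum_(l < n) col l A *m row l B.
Proof.
rewrite -{1}[A]mulmx1 scalar_mx_sum_delta mulmx_sumr mulmx_suml.
by apply: eq_bigr => l _; rewrite scale1r mulmx_delta_mx.
Qed.

Lemma castmx_mulmx3 a b p p' q q' (e1 : p = p') (e2 : q = q')
    (A : 'M[R]_(a, p)) (M : 'M[R]_(p, q)) (B : 'M[R]_(q, b)) :
  castmx (erefl a, e1) A *m castmx (e1, e2) M *m castmx (e2, erefl b) B =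
    A *m M *m B.
Proof. by case: p' / e1; case: q' / e2; rewrite !castmx_id. Qed.

End MatrixProducts.

Section ConjugateTranspose.
Variable C : numClosedFieldType.

Local Notation "B ^!" :=
  (orthomx Num.conj (mx_of_hermitian (hermitian1mx _)) B) : matrix_set_scope.

Lemma trmxC_mul m n p (A : 'M[C]_(m, n)) (B : 'M[C]_(n, p)) :
  (A *m B)^t* = B^t* *m A^t*.
Proof. by rewrite trmx_mul map_mxM. Qed.

Lemma trmxC_delta m n (i : 'I_m) (j : 'I_n) :
  (delta_mx i j : 'M[C]_(m, n))^t* = delta_mx j i.
Proof. by apply/matrixP => a b; rewrite !mxE andbC rmorph_nat. Qed.

Lemma col_trmxC m n (A : 'M[C]_(m, n)) i : col i (A^t*) = (row i A)^t*.
Proof. by apply/matrixP => a b; rewrite !mxE. Qed.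

Lemma trmxC_castmx a b n (e : a = b) (M : 'M[C]_(a, n)) :
  (castmx (e, erefl n) M)^t* = castmx (erefl n, e) (M^t*).
Proof. by case: b / e; rewrite !castmx_id. Qed.

Lemma castmx_unitary a b n (e : a = b) (M : 'M[C]_(a, n)) :
  M \is unitarymx -> castmx (e, erefl n) M \is unitarymx.
Proof. by case: b / e; rewrite castmx_id. Qed.

Lemma partial_isometry_trmxC p q (W : 'M[C]_(p, q)) :
  W *m W^t* *m W = W -> W^t* *m W *m W^t* = W^t*.
Proof. by move/(congr1 (fun M => M^t*)); rewrite !trmxC_mul trmxCK mulmxA. Qed.

(* Both sides are orthogonal projections: each fixes the other's range. *)
Lemma unitary_basis_projector k p q (B : 'M[C]_(k, q)) (W : 'M[C]_(p, q)) :
  B \is unitarymx -> W *m W^t* *m W = W -> (B :=: W)%MS ->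
  B^t* *m B = W^t* *m W.
Proof.
move=> /unitarymxP BB WWW eqBW.
have BP : B *m (W^t* *m W) = B.
  have /submxP [X ->] : (B <= W)%MS by rewrite eqBW.
  by rewrite -mulmxA [W *m _]mulmxA WWW.
have WQ : W *m (B^t* *m B) = W.
  have /submxP [Y ->] : (W <= B)%MS by rewrite eqBW.
  by rewrite -mulmxA [B *m _]mulmxA BB mul1mx.
have QP : B^t* *m B *m (W^t* *m W) = B^t* *m B by rewrite -mulmxA BP.
have PQ : W^t* *m W *m (B^t* *m B) = W^t* *m W by rewrite -mulmxA WQ.
have herm l (M : 'M[C]_(l, q)) : (M^t* *m M)^t* = M^t* *m M.
  by rewrite trmxC_mul trmxCK.
by rewrite -[LHS]herm -QP trmxC_mul !herm PQ.
Qed.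

Lemma unitary_completion p n (A : 'M[C]_(p, n)) : A \is unitarymx ->
  exists q (X : 'M[C]_(q, n)) (e : (p + q = n)%N), col_mx A X \is unitarymx.
Proof.
move=> A_unitary; have /unitarymxP AA := A_unitary.
exists (\rank A^!%MS), (schmidt (row_base A^!%MS)).
exists (etrans (congr1 (addn^~ _) (esym (mxrank_unitary A_unitary)))
                (add_rank_ortho A)).
apply/unitarymxP; rewrite tr_col_mx map_row_mx mul_col_row AA.
rewrite (unitarymxP (schmidt_unitarymx _ (rank_leq_col _))).
have X_ortho : (schmidt (row_base A^!%MS) <= A^!)%MS.
  by rewrite eqmx_schmidt_free ?eq_row_base ?row_base_free.
by rewrite !(orthomx1P _) -?scalar_mx_block // orthomx_sym.
Qed.

End ConjugateTranspose.

Lemma adjmxE m n (A : 'M[CC]_(m, n)) : adjmx A = A^t*.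
Proof. by []. Qed.

Lemma unitary_mxP n (U : 'M[CC]_n) : U \is unitarymx -> unitary_mx U.
Proof. by move=> /unitarymxP UU; split; rewrite adjmxE // mulmx1C. Qed.

Section TripleMorphism.
Variables (m n r s : nat) (T : {linear 'M[CC]_(m, n) -> 'M[CC]_(r, s)}).
Hypothesis T_triple : forall x y z, T (triple x y z) = triple (T x) (T y) (T z).
Variables (i0 : 'I_m) (j0 : 'I_n).

Local Notation E i j := (T (delta_mx i j)).

Lemma T_delta_triple i j i' j' i'' j'' :
  E i j *m (E i' j')^t* *m E i'' j'' =
    if (j == j') && (i' == i'') then E i j'' else 0.
Proof.
rewrite -[_ *m _ *m _]/(triple _ _ _) -T_triple /triple adjmxE trmxC_delta.
rewrite mul_delta_mx_cond.
case: (j == j'); last by rewrite mulr0n mul0mx linear0.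
by rewrite mul_delta_mx_cond; case: (i' == i''); rewrite ?mulr0n ?linear0.
Qed.

Local Notation W := (E i0 j0).

Lemma W_partial_isometry : W *m W^t* *m W = W.
Proof. by rewrite T_delta_triple !eqxx. Qed.

Lemma T_delta_factor i j : E i j = E i j0 *m W^t* *m E i0 j.
Proof. by rewrite T_delta_triple !eqxx. Qed.

Local Notation k := (\rank W).
Local Notation B := (schmidt (row_base W)).

Lemma B_unitary : B \is unitarymx.
Proof. exact: schmidt_unitarymx (rank_leq_col W). Qed.

Lemma B_projector : B^t* *m B = W^t* *m W.
Proof.
apply: unitary_basis_projector B_unitary W_partial_isometry _.
exact: eqmx_trans (eqmx_schmidt_free (row_base_free W)) (eq_row_base W).
Qed.

Lemma row_B_projector l : row l B *m (W^t* *m W) = row l B.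
Proof.
by rewrite -row_mul -B_projector mulmxA (unitarymxP B_unitary) mul1mx.
Qed.

Lemma row_B_dot l l' : (row l B *m (row l' B)^t*) 0 0 = (l == l')%:R.
Proof. by have /row_unitarymxP/(_ l l') := B_unitary; rewrite dotmxE. Qed.

Definition tens_left : 'M[CC]_(k * m, r) :=
  \matrix_p (row (mxtens_unindex p).1 B *m (E (mxtens_unindex p).2 j0)^t*).

Definition tens_right : 'M[CC]_(k * n, s) :=
  \matrix_p (row (mxtens_unindex p).1 B *m W^t* *m E i0 (mxtens_unindex p).2).

Lemma row_tens_left l i :
  row (mxtens_index (l, i)) tens_left = row l B *m (E i j0)^t*.
Proof. by rewrite rowK mxtens_indexK. Qed.

Lemma row_tens_right l j :
  row (mxtens_index (l, j)) tens_right = row l B *m W^t* *m E i0 j.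
Proof. by rewrite rowK mxtens_indexK. Qed.

Lemma tens_left_unitary : tens_left \is unitarymx.
Proof.
apply/row_unitarymxP => a b; rewrite dotmxE.
case: (mxtens_indexP a) => l i; case: (mxtens_indexP b) => l' i'.
rewrite !row_tens_left trmxC_mul trmxCK (inj_eq (can_inj (@mxtens_indexK _ _))).
rewrite -(row_B_projector l) -!mulmxA [W *m (_ *m _)]mulmxA.
rewrite [W *m _ *m (_ *m _)]mulmxA T_delta_triple eqxx xpair_eqE /=.
case: (i == i'); last by rewrite !(mul0mx, mulmx0) mxE andbF.
by rewrite [W^t* *m _]mulmxA mulmxA row_B_projector row_B_dot andbT.
Qed.

Lemma tens_right_unitary : tens_right \is unitarymx.
Proof.
apply/row_unitarymxP => a b; rewrite dotmxE.
case: (mxtens_indexP a) => l j; case: (mxtens_indexP b) => l' j'.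
rewrite !row_tens_right !trmxC_mul trmxCK.
rewrite (inj_eq (can_inj (@mxtens_indexK _ _))).
rewrite -!mulmxA [E i0 j *m _]mulmxA [E i0 j *m _ *m _]mulmxA.
rewrite T_delta_triple eqxx xpair_eqE andbT.
case: (j == j'); last by rewrite !(mul0mx, mulmx0) mxE andbF.
by rewrite [W^t* *m _]mulmxA mulmxA row_B_projector row_B_dot andbT.
Qed.

Lemma T_delta_tens i j :
  E i j = tens_left^t* *m (1%:M *t delta_mx i j) *m tens_right.
Proof.
transitivity (E i j0 *m (B^t* *m B) *m W^t* *m E i0 j).
  rewrite B_projector -(mulmxA (E i j0)).
  by rewrite (partial_isometry_trmxC W_partial_isometry) -T_delta_factor.
rewrite tens1mx_delta mulmx_sumr mulmx_suml (mulmx_sum_col_row (B^t*)).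
rewrite mulmx_sumr !mulmx_suml; apply: eq_bigr => l _.
rewrite mulmx_delta_mx !col_trmxC row_tens_left row_tens_right.
by rewrite trmxC_mul trmxCK !mulmxA.
Qed.

Lemma T_tens A : T A = tens_left^t* *m (1%:M *t A) *m tens_right.
Proof.
rewrite (matrix_sum_delta A) !linear_sum /= mulmx_suml; apply: eq_bigr => i _.
rewrite !linear_sum /= mulmx_suml; apply: eq_bigr => j _.
by rewrite !linearZ /= -scalemxAl T_delta_tens.
Qed.

Lemma triple_morphism_tens :
  exists k (U : 'M[CC]_(k * m, r)) (V : 'M[CC]_(k * n, s)),
    [/\ U \is unitarymx, V \is unitarymx &
         forall A, T A = U^t* *m (1%:M *t A) *m V].
Proof.
exists k, tens_left, tens_right.
split; [exact: tens_left_unitary | exact: tens_right_unitary | exact: T_tens].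
Qed.

End TripleMorphism.

Lemma tens_sandwich_inj (F : numClosedFieldType) m n r s k
    (U : 'M[F]_(k * m, r)) (V : 'M[F]_(k * n, s)) :
  (0 < k)%N -> U \is unitarymx -> V \is unitarymx ->
  injective (fun A : 'M[F]_(m, n) => U^t* *m (1%:M *t A) *m V).
Proof.
move=> k_gt0 /unitarymxP UU V_unitary A A'.
move/(congr1 (fun M => U *m M *m V^t*)).
rewrite /= !mulmxA UU !mul1mx !mulmxtVK // => eqAA'.
apply/matrixP => i j; pose l := Ordinal k_gt0.
move/matrixP/(_ (mxtens_index (l, i)) (mxtens_index (l, j))): eqAA'.
by rewrite !tensmxE mxE eqxx !mul1r.
Qed.

Lemma blockdiag_repE m n r s k q1 q2 (e1 : (k * m + q1 = r)%N)
    (e2 : (k * n + q2 = s)%N) (A : 'M[CC]_(m, n)) :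
  blockdiag_rep r s k A = castmx (e1, e2) (block_mx (1%:M *t A) 0 0 0).
Proof.
apply/matrixP => a b; rewrite castmxE mxE.
set a' := cast_ord _ a; set b' := cast_ord _ b.
have -> : (a : nat) = a' by []; have -> : (b : nat) = b' by [].
rewrite [RHS]mxE; case: splitP => [p ->|p ->]; last first.
  by rewrite row_mx0 mxE.
rewrite mxE; case: splitP => [q ->|q ->]; last by rewrite mxE.
(* [mxtens_unindex p] is [(p %/ m, p %% m)] by definition. *)
rewrite /mx_at (valK (mxtens_unindex p).2 : insub (p %% m)%N = _).
rewrite (valK (mxtens_unindex q).2 : insub (q %% n)%N = _) !mxE.
rewrite -[(_ %/ _ == _)%N]/((mxtens_unindex p).1 == (mxtens_unindex q).1).
by case: eqP; rewrite ?mulr1n ?mulr0n ?mul1r ?mul0r.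
Qed.

Lemma tens_sandwich_blockdiag m n r s k
    (U : 'M[CC]_(k * m, r)) (V : 'M[CC]_(k * n, s)) :
  U \is unitarymx -> V \is unitarymx ->
  [/\ (k * m <= r)%N, (k * n <= s)%N &
    exists (U' : 'M[CC]_r) (V' : 'M[CC]_s),
      [/\ unitary_mx U', unitary_mx V' & forall A : 'M[CC]_(m, n),
         U^t* *m (1%:M *t A) *m V = U' *m blockdiag_rep r s k A *m V']].
Proof.
move=> U_unitary V_unitary.
have [q1 [X [e1 UX_unitary]]] := unitary_completion U_unitary.
have [q2 [Y [e2 VY_unitary]]] := unitary_completion V_unitary.
split; [by rewrite -e1 leq_addr | by rewrite -e2 leq_addr |].
exists ((castmx (e1, erefl r) (col_mx U X))^t*).
exists (castmx (e2, erefl s) (col_mx V Y)).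
split=> [||A].
- by apply: unitary_mxP; rewrite trmxC_unitary castmx_unitary.
- by apply: unitary_mxP; rewrite castmx_unitary.
rewrite (blockdiag_repE e1 e2) trmxC_castmx castmx_mulmx3 tr_col_mx map_row_mx.
by rewrite mul_row_block mul_row_col !mulmx0 !addr0 mul0mx addr0.
Qed.

Theorem lemma3p5 (m n r s : nat) (T : 'M[CC]_(m, n) -> 'M[CC]_(r, s)) :
  triple_morphism T ->
  (exists A : 'M[CC]_(m, n), T A != 0) ->
  injective T /\
  exists k : nat, [/\ (1 <= k)%N, (k * m <= r)%N, (k * n <= s)%N &
    exists (U : 'M[CC]_r) (V : 'M[CC]_s),
      [/\ unitary_mx U, unitary_mx V &
          forall A : 'M[CC]_(m, n), T A = U *m blockdiag_rep r s k A *m V]].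
Proof.
case=> T_linear T_triple [A TA_neq0].
pose Tl : {linear 'M[CC]_(m, n) -> 'M[CC]_(r, s)} :=
  HB.pack T (GRing.isLinear.Build _ _ _ _ T T_linear).
have /matrix0Pn [i0 [j0 _]] : A != 0.
  by apply: contraNneq TA_neq0 => ->; apply/eqP; exact: (linear0 Tl).
have [k [U [V [U_unitary V_unitary T_tens]]]] :=
  triple_morphism_tens (T := Tl) T_triple i0 j0.
have k_gt0 : (0 < k)%N.
  rewrite lt0n; apply: contraNneq TA_neq0 => k0; subst k.
  by rewrite [T A]T_tens [1%:M *t A]flatmx0 mulmx0 mul0mx.
split=> [A1 A2|].
  by rewrite ![T _]T_tens => /(tens_sandwich_inj k_gt0 U_unitary V_unitary).
have [le_km_r le_kn_s [U' [V' [U'_unitary V'_unitary UV_blockdiag]]]] :=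
  tens_sandwich_blockdiag U_unitary V_unitary.
exists k; split=> //; exists U', V'; split=> // B.
by rewrite [T B]T_tens UV_blockdiag.
Qed.
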